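(* Consider the semi-distributed gossip network described in the context, with $n$ nodes, source self-update rate $\lambda_e>0$, source-to-network update rate $\lambda>0$, and total gossip capacity $B=n\lambda$. Then, with $\lambda_e$ and $\lambda$ fixed, the steady-state mean version age $a_i=\lim_{t\to\infty}\mathbb{E}[\Delta_i(t)]$ of any node $i$ scales as $O(1)$ as $n\to\infty$.
   Context: A source (node $0$) and nodes $\mathcal{N}=\{1,\dots,n\}$ form a fully connected network. The source generates new versions of its information according to a Poisson process of rate $\lambda_e$; $N_s(t)$ denotes the source's version at time $t$ and $N_i(t)$ the version held by node $i$. The source sends its current version to each node $i$ according to an independent Poisson process of rate $\lambda/n$ (total rate $\lambda$). The version age of node $i$ is $\Delta_i(t)=N_s(t)-N_i(t)$: a source self-update increases every $\Delta_i$ by $1$; a source-to-node-$i$ update sets $\Delta_i$ to $0$; when node $j$ gossips to node $i$, node $i$'s age becomes $\min\{\Delta_j(t),\Delta_i(t)\}$. A node gossiping at total rate $B$ sends gossip updates to each of its $n-1$ neighbors according to a Poisson process of rate $B/(n-1)$. Semi-distributed scheme: whenever a node receives an update from the source, it sends a pilot signal to all other nodes and starts gossiping with total rate $B$; a gossiping node stops gossiping as soon as it receives a pilot signal from another node. Thus at any time (at most) one node gossips, namely the one most recently updated by the source. The steady-state mean age is $a_i=\lim_{t\to\infty}\mathbb{E}[\Delta_i(t)]$. *)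

From HB Require Import structures.
From mathcomp Require Import all_boot all_order all_algebra.
From mathcomp Require Import all_classical all_reals all_analysis.
Set Implicit Arguments. Unset Strict Implicit. Unset Printing Implicit Defensive.
Import Order.TTheory GRing.Theory Num.Theory.
Import numFieldNormedType.Exports.
Local Open Scope ring_scope.

(* Event types (one finite type):
     None           : the source generates a new version (rate lam_e);
     Some (inl j)   : the source sends its version to node j (rate lam/n);
     Some (inr k)   : the currently gossiping node (if any) sends a gossip
                      update to node k (rate B/(n-1) for each k).  If k is the
                      gossiping node itself, or if no node gossips yet, the
                      event has no effect (a phantom event; this only adds
                      self-loops and does not change the law of the process,
                      since each of the n-1 real neighbours still receives
                      gossip at rate B/(n-1)). *)
Definition event (n : nat) := option ('I_n + 'I_n)%type.

(* State: the vector of version ages, and the node currently gossiping. *)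
Definition gstate (n : nat) := (('I_n -> nat) * option 'I_n)%type.

Definition step (n : nat) (e : event n) (x : gstate n) : gstate n :=
  let: (age, g) := x in
  match e with
  | None => (fun m => (age m).+1, g)
  | Some (inl j) =>
      (* node j is reset to age 0, sends a pilot signal (any previous
         gossiper stops) and becomes the unique gossiping node *)
      (fun m => if m == j then 0%N else age m, Some j)
  | Some (inr k) =>
      match g with
      | Some gg =>
          if k == gg then x
          else (fun m => if m == k then minn (age gg) (age k) else age m, g)
      | None => x
      end
  end.

Definition rate (R : realType) (n : nat) (lam_e lam B : R) (e : event n) : R :=
  match e with
  | None => lam_e
  | Some (inl _) => lam / n%:R
  | Some (inr _) => B / (n.-1)%:R
  end.

Definition total_rate (R : realType) (n : nat) (lam_e lam B : R) : R :=
  \sum_(e : event n) rate lam_e lam B e.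

Fixpoint expect_after (R : realType) (n : nat) (lam_e lam B : R) (k : nat)
    (f : gstate n -> R) (x : gstate n) : R :=
  match k with
  | 0%N => f x
  | k'.+1 => \sum_(e : event n)
      (rate lam_e lam B e / total_rate n lam_e lam B) *
      expect_after lam_e lam B k' f (step e x)
  end.

Definition init_state (n : nat) : gstate n := (fun _ => 0%N, None).

(* E[Delta_i(t)]: events occur according to a Poisson process of rate
   q = total_rate, so the number of events by time t is Poisson(q t). *)
Definition mean_age (R : realType) (n : nat) (lam_e lam B : R) (i : 'I_n)
    (t : R) : R :=
  let q := total_rate n lam_e lam B in
  limn (fun N : nat => \sum_(0 <= k < N)
     (expR (- (q * t)) * (q * t) ^+ k / (k`!)%:R *
      expect_after lam_e lam B k (fun x => ((x.1 i)%:R : R)) (init_state n))).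

From HB Require Import structures.
From mathcomp Require Import all_boot all_order all_algebra.
From mathcomp Require Import all_classical all_reals all_analysis.
From mathcomp Require Import ring lra.
Import Order.TTheory GRing.Theory Num.Theory.
Import numFieldNormedType.Exports.
Local Open Scope classical_set_scope.
Local Open Scope ring_scope.

(** The mean age of node i after k events of the uniformized chain is driven,
    together with the mean gap between the age of node i and that of the current
    gossiper, by an affine 2x2 recursion.  Its two left eigenvectors decouple it
    into scalar geometric recursions with ratios 1 - (p_s + p_g) and 1 - n p_s,
    so the mean age is a + b1 r1^k + b2 r2^k.  Averaging over the Poisson(q t)
    number of events turns r^k into exp(-q t (1 - r)), hence the mean age
    converges to the fixed point a, which for B = n lam equals
    lam_e / lam * n (2n - 1) / (n^2 + n - 1) <= 2 lam_e / lam. *)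

Lemma affine_recurrence_closed_form (R : fieldType) (x : nat -> R) (p c : R) :
  p != 0 -> x 0%N = 0 -> (forall k, x k.+1 = (1 - p) * x k + c) ->
  forall k, x k = c / p * (1 - (1 - p) ^+ k).
Proof.
move=> p_neq0 x0 xS; elim=> [|k IHk]; first by rewrite x0 expr0 subrr mulr0.
by rewrite xS IHk exprS; field.
Qed.

Section TwoModeRecurrence.
Variables (R : fieldType) (m ps pg p0 : R) (u w : nat -> R).
Hypotheses (u0 : u 0%N = 0) (w0 : w 0%N = 0).
Hypothesis uS : forall k, u k.+1 = (1 - ps) * u k - pg * w k + p0.
Hypothesis wS : forall k, w k.+1 = (m - 1) * ps * u k + (1 - m * ps - pg) * w k.
Hypotheses (mps_neq0 : m * ps != 0) (ps_pg_neq0 : ps + pg != 0).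
Hypothesis modes_distinct : (m - 1) * ps - pg != 0.

Lemma two_mode_closed_form : exists b1 b2 : R, forall k,
  u k = p0 * (m * ps + pg) / (m * ps * (ps + pg))
        + b1 * (1 - (ps + pg)) ^+ k + b2 * (1 - m * ps) ^+ k.
Proof.
have [m_neq0 ps_neq0] : m != 0 /\ ps != 0 by apply/andP; rewrite -negb_or -mulf_eq0.
have diffE k : u k - w k = p0 / (m * ps) * (1 - (1 - m * ps) ^+ k).
  apply: (@affine_recurrence_closed_form _ (fun k => u k - w k)) => // [|j].
  - by rewrite u0 w0 subrr.
  - by rewrite uS wS; ring.
have mixE k : (m - 1) * ps * u k - pg * w k =
    (m - 1) * ps * p0 / (ps + pg) * (1 - (1 - (ps + pg)) ^+ k).
  apply: (@affine_recurrence_closed_form _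
    (fun k => (m - 1) * ps * u k - pg * w k)) => // [|j].
  - by rewrite u0 w0 !mulr0 subrr.
  - by rewrite uS wS; ring.
exists (- ((m - 1) * ps * p0 / ((ps + pg) * ((m - 1) * ps - pg)))).
exists (pg * p0 / (m * ps * ((m - 1) * ps - pg))) => k.
have -> : u k = (((m - 1) * ps * u k - pg * w k) - pg * (u k - w k)) / ((m - 1) * ps - pg).
  by field.
by rewrite diffE mixE; field; rewrite modes_distinct ps_neq0 m_neq0.
Qed.
End TwoModeRecurrence.

Section PoissonMixture.
Context {R : realType}.

Lemma poisson_geometric_cvg (x r : R) :
  (fun N : nat => \sum_(0 <= k < N) expR (- x) * x ^+ k / k`!%:R * r ^+ k)
  @ \oo --> expR (x * (r - 1)).
Proof.
have -> : expR (x * (r - 1)) = expR (- x) * expR (x * r).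
  by rewrite -expRD mulrBr mulr1 addrC.
have -> : (fun N : nat => \sum_(0 <= k < N) expR (- x) * x ^+ k / k`!%:R * r ^+ k)
    = (fun N => expR (- x) * series (exp_coeff (x * r)) N).
  apply/funext => N; rewrite seriesEnat /= mulr_sumr.
  by apply: eq_bigr => k _; rewrite /exp_coeff /= exprMn; ring.
exact: cvgM (cvg_cst _) (is_cvg_series_exp_coeff _).
Qed.

Lemma poisson_mixture_cvg (x : R) {a b1 b2 r1 r2 : R} {u : nat -> R} :
  (forall k, u k = a + b1 * r1 ^+ k + b2 * r2 ^+ k) ->
  (fun N : nat => \sum_(0 <= k < N) expR (- x) * x ^+ k / k`!%:R * u k)
  @ \oo --> a + b1 * expR (x * (r1 - 1)) + b2 * expR (x * (r2 - 1)).
Proof.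
pose P k := expR (- x) * x ^+ k / k`!%:R.
move=> uE; have -> : (fun N : nat => \sum_(0 <= k < N) P k * u k) =
  (fun N => a * (\sum_(0 <= k < N) P k * 1 ^+ k) + b1 * (\sum_(0 <= k < N) P k * r1 ^+ k)
     + b2 * (\sum_(0 <= k < N) P k * r2 ^+ k)).
  apply/funext => N; rewrite !mulr_sumr -!big_split /=.
  by apply: eq_bigr => k _; rewrite uE expr1n; ring.
have -> : a + b1 * expR (x * (r1 - 1)) + b2 * expR (x * (r2 - 1)) =
    a * expR (x * (1 - 1)) + b1 * expR (x * (r1 - 1)) + b2 * expR (x * (r2 - 1)).
  by rewrite subrr mulr0 expR0 mulr1.
by apply: cvgD; [apply: cvgD|]; apply: cvgM (cvg_cst _) (poisson_geometric_cvg _ _).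
Qed.

Lemma cvgr_expR_mul_neg (c : R) : c < 0 -> expR (c * t) @[t --> +oo] --> 0.
Proof.
move=> c_lt0; have -> : (fun t => expR (c * t)) = (fun t => expR (- t)) \o (fun t => - c * t).
  by apply/funext => t /=; rewrite mulNr opprK.
have : - c * t @[t --> +oo] --> +oo.
  by apply: gt0_cvgMry; [rewrite oppr_gt0 | exact: cvg_id].
by move/cvg_comp; apply; exact: cvgr_expR.
Qed.

Lemma poisson_mixture_limit {q a b1 b2 r1 r2 : R} {u : nat -> R} :
  0 < q -> r1 < 1 -> r2 < 1 -> (forall k, u k = a + b1 * r1 ^+ k + b2 * r2 ^+ k) ->
  limn (fun N : nat => \sum_(0 <= k < N)
          expR (- (q * t)) * (q * t) ^+ k / k`!%:R * u k) @[t --> +oo] --> a.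
Proof.
move=> q_gt0 r1_lt1 r2_lt1 uE.
have decay r : r < 1 -> expR (q * t * (r - 1)) @[t --> +oo] --> 0.
  move=> r_lt1; under eq_fun do rewrite mulrAC.
  by apply: cvgr_expR_mul_neg; rewrite pmulr_rlt0 // subr_lt0.
under eq_fun do rewrite (cvg_lim _ (poisson_mixture_cvg _ uE)) //.
suff : a + b1 * expR (q * t * (r1 - 1)) + b2 * expR (q * t * (r2 - 1))
    @[t --> +oo] --> a + b1 * 0 + b2 * 0 by rewrite !mulr0 !addr0.
by apply: cvgD; [apply: cvgD; [exact: cvg_cst|]|]; apply: cvgM (cvg_cst _) (decay _ _).
Qed.
End PoissonMixture.

Lemma big_option (R : nmodType) (T : finType) (F : option T -> R) :
  \sum_(e : option T) F e = F None + \sum_(t : T) F (Some t).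
Proof.
rewrite (bigD1 None) //= (reindex_omap Some id) //=; last by case.
by congr (_ + _); apply: eq_bigl => t; rewrite eqxx.
Qed.

Lemma sum_event (R : nmodType) (n : nat) (F : event n -> R) :
  \sum_(e : event n) F e = F None + \sum_(j : 'I_n) F (Some (inl j))
                                  + \sum_(k : 'I_n) F (Some (inr k)).
Proof. by rewrite big_option big_sumType addrA. Qed.

Lemma sum_sub_indicator (R : pzRingType) (T : finType) (i : T) (c d : R) :
  \sum_(j : T) (c - (j == i)%:R * d) = #|T|%:R * c - d.
Proof.
rewrite sumrB sumr_const mulr_natl (bigD1 i) //= eqxx mul1r big1 ?addr0 //.
by move=> j /negbTE ->; rewrite mul0r.
Qed.

Lemma natr_pred (R : pzRingType) (n : nat) : (0 < n)%N -> n.-1%:R = n%:R - 1 :> R.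
Proof. by move=> n_gt0; rewrite -[in RHS](prednK n_gt0) -natr1 addrK. Qed.

Definition node_age {R : pzRingType} {n : nat} (i : 'I_n) (x : gstate n) : R :=
  (x.1 i)%:R.

(* Truncated subtraction makes a gossip update lower the age of node i by
   exactly this gap, whichever of the two ages is smaller. *)
Definition gossip_gap {R : pzRingType} {n : nat} (i : 'I_n) (x : gstate n) : R :=
  if x.2 is Some g then (x.1 i - x.1 g)%:R else 0.

Section EventEffects.
Variables (R : pzRingType) (n : nat) (i : 'I_n) (x : gstate n).
Local Notation A := (@node_age R n i).
Local Notation G := (@gossip_gap R n i).

Lemma node_age_version : A (step None x) = A x + 1.
Proof. by case: x => age g; rewrite /node_age /= -addn1 natrD. Qed.

Lemma node_age_source j : A (step (Some (inl j)) x) = A x - (j == i)%:R * A x.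
Proof.
case: x => age g; rewrite /node_age /= eq_sym.
by case: (j == i); rewrite ?mul1r ?subrr ?mul0r ?subr0.
Qed.

Lemma node_age_gossip k : A (step (Some (inr k)) x) = A x - (k == i)%:R * G x.
Proof.
case: x => age [g|]; rewrite /node_age /gossip_gap /=; last by rewrite mulr0 subr0.
case: eqP => [->|_] /=.
  by case: (eqVneq g i) => [->|_]; rewrite ?subnn ?mulr0 ?mul0r subr0.
rewrite eq_sym; case: eqP => [->|_]; last by rewrite mul0r subr0.
by rewrite mul1r -natrB ?leq_subr // -minnE minnC.
Qed.

Lemma gossip_gap_version : G (step None x) = G x.
Proof. by case: x => age [g|] //; rewrite /gossip_gap /= subSS. Qed.

Lemma gossip_gap_source j : G (step (Some (inl j)) x) = A x - (j == i)%:R * A x.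
Proof.
case: x => age g; rewrite /node_age /gossip_gap /= eqxx subn0 eq_sym.
by case: (j == i); rewrite ?mul1r ?subrr ?mul0r ?subr0.
Qed.

Lemma gossip_gap_gossip k : G (step (Some (inr k)) x) = G x - (k == i)%:R * G x.
Proof.
case: x => age [g|]; rewrite /gossip_gap /=; last by rewrite mulr0 subr0.
case: eqP => [->|/eqP k_neq_g] /=.
  by case: (eqVneq g i) => [->|_]; rewrite ?subnn ?mulr0 ?mul0r subr0.
rewrite [g == k]eq_sym (negbTE k_neq_g) eq_sym.
case: eqP => [<-|_]; last by rewrite mul0r subr0.
by rewrite mul1r subrr; move/eqP: (geq_minl (age g) (age k)) => ->.
Qed.

End EventEffects.

Section EventProbabilities.
Variables (R : realType) (n : nat) (lam_e lam B : R).
Local Notation q := (total_rate n lam_e lam B).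
Local Notation prob e := (rate lam_e lam B e / q).
Local Notation p0 := (lam_e / q).
Local Notation ps := (lam / n%:R / q).
Local Notation pg := (B / n.-1%:R / q).
Hypothesis q_neq0 : q != 0.

Lemma sum_event_prob : \sum_(e : event n) prob e = 1.
Proof. by rewrite -mulr_suml mulfV. Qed.

Lemma prob_version_complement : p0 = 1 - n%:R * ps - n%:R * pg.
Proof.
by rewrite -{1}sum_event_prob sum_event /= !sumr_const card_ord !mulr_natl; ring.
Qed.

Lemma expect_afterS k f x :
  expect_after lam_e lam B k.+1 f x =
  \sum_(e : event n) prob e * expect_after lam_e lam B k f (step e x).
Proof. by []. Qed.

Lemma expect_after_affine (f g : gstate n -> R) (a b c : R) :
    (forall x, \sum_(e : event n) prob e * f (step e x) = a * f x + b * g x + c) ->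
  forall k x, expect_after lam_e lam B k.+1 f x =
    a * expect_after lam_e lam B k f x + b * expect_after lam_e lam B k g x + c.
Proof.
move=> drift; elim=> [|k IHk] x; first exact: drift.
rewrite [LHS]expect_afterS.
transitivity (\sum_(e : event n)
    (a * (prob e * expect_after lam_e lam B k f (step e x))
     + b * (prob e * expect_after lam_e lam B k g (step e x)) + c * prob e)).
  by apply: eq_bigr => e _; rewrite IHk; ring.
by rewrite !big_split /= -!mulr_sumr sum_event_prob mulr1.
Qed.

Lemma expect_step_node_age (i : 'I_n) x :
  \sum_(e : event n) prob e * node_age i (step e x) =
  (1 - ps) * node_age i x - pg * gossip_gap i x + p0.
Proof.
rewrite sum_event /= node_age_version.
under eq_bigr do rewrite node_age_source.
under [X in _ + X]eq_bigr do rewrite node_age_gossip.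
by rewrite -!mulr_sumr !sum_sub_indicator card_ord prob_version_complement; ring.
Qed.

Lemma expect_step_gossip_gap (i : 'I_n) x :
  \sum_(e : event n) prob e * gossip_gap i (step e x) =
  (n%:R - 1) * ps * node_age i x + (1 - n%:R * ps - pg) * gossip_gap i x.
Proof.
rewrite sum_event /= gossip_gap_version.
under eq_bigr do rewrite gossip_gap_source.
under [X in _ + X]eq_bigr do rewrite gossip_gap_gossip.
by rewrite -!mulr_sumr !sum_sub_indicator card_ord prob_version_complement; ring.
Qed.

Lemma expect_after_node_age (i : 'I_n) k x :
  expect_after lam_e lam B k.+1 (node_age i) x =
  (1 - ps) * expect_after lam_e lam B k (node_age i) x
  - pg * expect_after lam_e lam B k (gossip_gap i) x + p0.
Proof.
have drift y : \sum_(e : event n) prob e * node_age i (step e y) =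
    (1 - ps) * node_age i y + (- pg) * gossip_gap i y + p0.
  by rewrite expect_step_node_age mulNr.
by rewrite (expect_after_affine _ _ _ _ _ drift) mulNr.
Qed.

Lemma expect_after_gossip_gap (i : 'I_n) k x :
  expect_after lam_e lam B k.+1 (gossip_gap i) x =
  (n%:R - 1) * ps * expect_after lam_e lam B k (node_age i) x
  + (1 - n%:R * ps - pg) * expect_after lam_e lam B k (gossip_gap i) x.
Proof.
have drift y : \sum_(e : event n) prob e * gossip_gap i (step e y) =
    (1 - n%:R * ps - pg) * gossip_gap i y + (n%:R - 1) * ps * node_age i y + 0.
  by rewrite expect_step_gossip_gap addrC addr0.
by rewrite (expect_after_affine _ _ _ _ _ drift) addr0 addrC.
Qed.

End EventProbabilities.

(* The fixed point of the two drift equations, written with the rates. *)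
Definition stationary_age {R : realType} (n : nat) (lam_e lam B : R) : R :=
  lam_e * (lam + B / n.-1%:R) / (lam * (lam / n%:R + B / n.-1%:R)).

Section MeanAgeLimit.
Variables (R : realType) (n : nat) (lam_e lam B : R) (i : 'I_n).
Hypotheses (n_ge2 : (2 <= n)%N) (lam_e_gt0 : 0 < lam_e) (lam_gt0 : 0 < lam).
Hypothesis B_gt0 : 0 < B.
(* equivalently (n - 1) p_s != p_g: the two geometric ratios differ *)
Hypothesis modes_distinct : n%:R * B != (n%:R - 1) ^+ 2 * lam.
Local Notation q := (total_rate n lam_e lam B).
Local Notation p0 := (lam_e / q).
Local Notation ps := (lam / n%:R / q).
Local Notation pg := (B / n.-1%:R / q).

Let n1E : n.-1%:R = n%:R - 1 :> R. Proof. by rewrite natr_pred // ltnW. Qed.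
Let n1_gt0 : 0 < n%:R - 1 :> R. Proof. by rewrite subr_gt0 ltr1n. Qed.
Let n_gt0 : 0 < n%:R :> R. Proof. by rewrite ltr0n ltnW. Qed.
Let q_gt0 : 0 < q.
Proof.
rewrite /total_rate sum_event /= !sumr_const card_ord.
by rewrite !addr_gt0 ?mulrn_wgt0 ?divr_gt0 ?n1E // ltnW.
Qed.
Let ps_gt0 : 0 < ps. Proof. by rewrite !divr_gt0. Qed.
Let pg_gt0 : 0 < pg. Proof. by rewrite !divr_gt0 ?n1E. Qed.

Lemma expect_node_age_closed_form : exists b1 b2 : R, forall k,
  expect_after lam_e lam B k (node_age i) (init_state n) =
    p0 * (n%:R * ps + pg) / (n%:R * ps * (ps + pg))
    + b1 * (1 - (ps + pg)) ^+ k + b2 * (1 - n%:R * ps) ^+ k.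
Proof.
have q_neq0 : q != 0 by rewrite gt_eqF.
apply: (@two_mode_closed_form _ _ _ _ _ _
  (fun k => expect_after lam_e lam B k (gossip_gap i) (init_state n))).
- by rewrite /node_age /=.
- by [].
- by move=> k; rewrite expect_after_node_age.
- by move=> k; rewrite expect_after_gossip_gap.
- by rewrite mulf_neq0 ?gt_eqF.
- by rewrite gt_eqF ?addr_gt0.
- have -> : (n%:R - 1) * ps - pg =
      ((n%:R - 1) ^+ 2 * lam - n%:R * B) / (n%:R * (n%:R - 1) * q).
    by rewrite n1E; field; rewrite !gt_eqF.
  apply: mulf_neq0; first by rewrite subr_eq0 eq_sym.
  by rewrite invr_eq0 !mulf_neq0 ?gt_eqF.
Qed.

Lemma mean_age_cvg :
  mean_age lam_e lam B i t @[t --> +oo] --> stationary_age n lam_e lam B.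
Proof.
have [b1 [b2 ageE]] := expect_node_age_closed_form.
have -> : stationary_age n lam_e lam B =
    p0 * (n%:R * ps + pg) / (n%:R * ps * (ps + pg)).
  have rates_gt0 : 0 < lam * (n%:R - 1) + B * n%:R by rewrite addr_gt0 ?mulr_gt0.
  by rewrite /stationary_age n1E; field; rewrite !gt_eqF.
apply: (poisson_mixture_limit _ _ _ ageE) => //; rewrite gtrBl.
  exact: addr_gt0.
exact: mulr_gt0.
Qed.

End MeanAgeLimit.

Lemma stationary_age_full_gossip (R : realType) (n : nat) (lam_e lam : R) :
  (2 <= n)%N -> 0 < lam ->
  stationary_age n lam_e lam (n%:R * lam) =
    lam_e / lam * (n%:R * (2 * n%:R - 1) / (n%:R ^+ 2 + n%:R - 1)).
Proof.
move=> n_ge2 lam_gt0; have n_ge2R : 2 <= n%:R :> R by rewrite (ler_nat R 2).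
rewrite /stationary_age natr_pred ?(leq_trans _ n_ge2) //; field.
by rewrite !gt_eqF //; nra.
Qed.

Lemma stationary_age_full_gossip_le (R : realType) (n : nat) (lam_e lam : R) :
  (2 <= n)%N -> 0 < lam_e -> 0 < lam ->
  stationary_age n lam_e lam (n%:R * lam) <= 2 * lam_e / lam.
Proof.
move=> n_ge2 lam_e_gt0 lam_gt0; have n_ge2R : 2 <= n%:R :> R by rewrite (ler_nat R 2).
rewrite stationary_age_full_gossip // -[2 * _ / _]mulrA [X in _ <= X]mulrC.
by rewrite ler_pM2l ?divr_gt0 // ler_pdivrMr; nra.
Qed.

Theorem theorem1 (R : realType) (lam_e lam : R) :
  0 < lam_e -> 0 < lam ->
  exists C : R, exists N : nat, forall n : nat, (2 <= n)%N -> (N <= n)%N ->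
    forall i : 'I_n, exists a : R,
      (mean_age lam_e lam (n%:R * lam) i t @[t --> +oo] --> a) /\ a <= C.
Proof.
move=> lam_e_gt0 lam_gt0; exists (2 * lam_e / lam), 2%N => n n_ge2 _ i.
have n_ge2R : 2 <= n%:R :> R by rewrite (ler_nat R 2).
exists (stationary_age n lam_e lam (n%:R * lam)); split.
  apply: mean_age_cvg => //; first by rewrite mulr_gt0 // (lt_le_trans _ n_ge2R).
  by rewrite mulrA -expr2; apply/eqP; nra.
exact: stationary_age_full_gossip_le.
Qed.
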